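(* Let $\sigma:\mathcal{A}^*\to\mathcal{B}^*$ be an injective and strongly left proper morphism. The following are equivalent: (1) the sets $\mathcal{T}^-(\sigma)$ and $\mathcal{T}^+(\sigma)$ each contain exactly one element; (2) for every shift space $X$ over $\mathcal{A}$ and every dendric bispecial factor $v\in\mathcal{L}(X)$, $\sigma$ is dendric preserving for $v$.
   Context: A shift space over $\mathcal{A}$ is a closed shift-invariant $X\subseteq\mathcal{A}^{\mathbb{Z}}$ in which all letters occur, with factor set $\mathcal{L}(X)$. For $w\in\mathcal{L}(X)$: $E^-_X(w)=\{a:aw\in\mathcal{L}(X)\}$, $E^+_X(w)=\{b:wb\in\mathcal{L}(X)\}$, $E_X(w)=\{(a,b):awb\in\mathcal{L}(X)\}$; $\mathcal{E}_X(w)$ is the bipartite graph with left vertices $E^-_X(w)$, right vertices $E^+_X(w)$ and edges $E_X(w)$; $w$ is bispecial if $\#E^\pm_X(w)\ge2$, dendric if $\mathcal{E}_X(w)$ is a tree. Morphisms are non-erasing; $\sigma$ is strongly left proper with first letter $\ell$ if every $\sigma(a)$ begins with $\ell$ and contains $\ell$ exactly once. Image of $X$: $Y=\{S^k\sigma(x):x\in X,0\le k<|\sigma(x_0)|\}$. For non-empty $u\in\mathcal{L}(Y)$ containing $\ell$ there is a unique triple $(s,v,p)$, $v\in\mathcal{L}(X)$, $u=s\sigma(v)p$, with $s$ a proper suffix of $\sigma(a)$, $p$ a non-empty prefix of $\sigma(b)$ for some $(a,b)\in E_X(v)$; $u$ is then an extended image of $v$. $\sigma$ is dendric preserving for $v$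 if every bispecial extended image of $v$ is dendric in $Y$. $\mathcal{T}^-(\sigma)=\{s(a_1,a_2):a_1,a_2\in\mathcal{A},a_1\ne a_2\}$ and $\mathcal{T}^+(\sigma)=\{p(b_1,b_2):b_1\ne b_2\}$, where $s(a_1,a_2)$ (resp. $p(b_1,b_2)$) is the longest common suffix of $\sigma(a_1),\sigma(a_2)$ (resp. longest common prefix of $\sigma(b_1),\sigma(b_2)$). *)

From mathcomp Require Import all_boot all_algebra.
From mathcomp Require Import boolp.
Set Implicit Arguments. Unset Strict Implicit. Unset Printing Implicit Defensive.
Import GRing.Theory Num.Theory.

Definition morph (A B : Type) (sigma : A -> seq B) (w : seq A) : seq B :=
  flatten (map sigma w).

Definition non_erasing (A B : Type) (sigma : A -> seq B) : Prop :=
  forall a, sigma a <> [::].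

Definition strongly_left_proper_with (A : Type) (B : eqType)
  (sigma : A -> seq B) (l : B) : Prop :=
  forall a, (exists w, sigma a = l :: w) /\ count_mem l (sigma a) = 1%N.

Definition strongly_left_proper (A : Type) (B : eqType) (sigma : A -> seq B) :=
  exists l, strongly_left_proper_with sigma l.

Fixpoint lcp (B : eqType) (u v : seq B) : seq B :=
  match u, v with
  | x :: u', y :: v' => if x == y then x :: lcp u' v' else [::]
  | _, _ => [::]
  end.

Definition lcs (B : eqType) (u v : seq B) : seq B := rev (lcp (rev u) (rev v)).

Definition Tminus (A B : eqType) (sigma : A -> seq B) (t : seq B) : Prop :=
  exists a1 a2, a1 != a2 /\ t = lcs (sigma a1) (sigma a2).
Definition Tplus (A B : eqType) (sigma : A -> seq B) (t : seq B) : Prop :=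
  exists b1 b2, b1 != b2 /\ t = lcp (sigma b1) (sigma b2).

Definition shiftk (A : Type) (k : int) (x : int -> A) : int -> A :=
  fun n => x (n + k)%R.

Definition window (A : Type) (x : int -> A) (i : int) (m : nat) : seq A :=
  [seq x (i + (k%:Z))%R | k <- iota 0 m].

(* a closed (in the product topology of the discrete alphabet),
   shift-invariant (S(X) = X) set in which all letters occur *)
Definition closed_set (A : Type) (X : (int -> A) -> Prop) : Prop :=
  forall x, (forall N : nat, exists y, X y /\
               forall n : int, (`|n| <= N)%N -> y n = x n) -> X x.

Definition shift_space (A : Type) (X : (int -> A) -> Prop) : Prop :=
  [/\ closed_set X,
      forall x, X x <-> X (shiftk 1 x)
    & forall a : A, exists x, X x /\ exists n, x n = a].

(* the factor set L(X) (contains the empty word) *)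
Definition lang (A : Type) (X : (int -> A) -> Prop) (w : seq A) : Prop :=
  exists x, X x /\ exists i, w = window x i (size w).

(* position in sigma(x) of the beginning of sigma(x_j); sigma(x_0) starts at 0 *)
Definition img_pos (A B : Type) (sigma : A -> seq B) (x : int -> A) (j : int)
  : int :=
  match j with
  | Posz n => Posz (\sum_(k < n) size (sigma (x (Posz k))))%N
  | Negz n => (- Posz (\sum_(k < n.+1) size (sigma (x (Negz k))))%N)%R
  end.

(* z is the bi-infinite word ... sigma(x_{-1}) . sigma(x_0) sigma(x_1) ... *)
Definition is_img (A B : Type) (sigma : A -> seq B) (x : int -> A)
  (z : int -> B) : Prop :=
  forall j : int, window z (img_pos sigma x j) (size (sigma (x j))) = sigma (x j).

Definition image_shift (A B : Type) (sigma : A -> seq B)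
  (X : (int -> A) -> Prop) : (int -> B) -> Prop :=
  fun y => exists x, X x /\ exists k : nat, (k < size (sigma (x 0%R)))%N /\
    exists z, is_img sigma x z /\ y = shiftk (k%:Z) z.

Section Ext.
Variables (A : finType) (L : seq A -> Prop).

Definition Eminus (w : seq A) : {set A} := [set a | `[< L (a :: w) >]].
Definition Eplus (w : seq A) : {set A} := [set b | `[< L (rcons w b) >]].
Definition Eboth (w : seq A) (a b : A) : Prop := L (a :: rcons w b).

Definition bispecial (w : seq A) : Prop :=
  L w /\ (2 <= #|Eminus w|)%N /\ (2 <= #|Eplus w|)%N.

(* the extension graph: left vertices inl a (a in E^-), right vertices
   inr b (b in E^+), undirected edges {inl a, inr b} for (a,b) in E(w) *)
Definition ext_vertex (w : seq A) (v : A + A) : bool :=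
  match v with inl a => a \in Eminus w | inr b => b \in Eplus w end.

Definition ext_edge (w : seq A) : rel (A + A) :=
  fun u v => match u, v with
  | inl a, inr b => `[< Eboth w a b >]
  | inr b, inl a => `[< Eboth w a b >]
  | _, _ => false
  end.

Definition is_tree (V : finType) (vert : pred V) (e : rel V) : Prop :=
  [/\ exists v, vert v,
      forall u v, vert u -> vert v -> connect e u v
    & ~ exists c : seq V, [/\ (3 <= size c)%N, all vert c, uniq c & cycle e c]].

Definition dendric (w : seq A) : Prop :=
  L w /\ is_tree (ext_vertex w) (ext_edge w).
End Ext.

Definition ext_image (A B : finType) (sigma : A -> seq B)
  (X : (int -> A) -> Prop) (v : seq A) (u : seq B) : Prop :=
  lang (image_shift sigma X) u /\
  exists a b s p, [/\ Eboth (lang X) v a b,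
     (exists s', s' != [::] /\ sigma a = s' ++ s),
     (exists p', p != [::] /\ sigma b = p ++ p')
   & u = s ++ morph sigma v ++ p].

Definition dendric_preserving (A B : finType) (sigma : A -> seq B)
  (X : (int -> A) -> Prop) (v : seq A) : Prop :=
  forall u, ext_image sigma X v u ->
    bispecial (lang (image_shift sigma X)) u ->
    dendric (lang (image_shift sigma X)) u.

(* Since [sigma] is injective and strongly left proper with first letter [l],
   the occurrences of [l] in an image word mark the boundaries of the images of
   letters. Hence the two-sided extensions [c u d] of an extended image
   [u = s sigma(v) p] correspond to the extensions [a v b] of [v]: [c] is the
   letter before [s] at the end of [sigma(a)], and [d] the letter after [p] in
   [sigma(b)] followed by the next image. When [T^-(sigma) = {s}] and
   [T^+(sigma) = {p}] both letter maps are injective, so the extension graph of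
   [u] is a copy of that of [v].
   Conversely, let [x <> y], [s = lcs(sigma x, sigma y)], [p = lcp(sigma x, sigma y)].
   If some [sigma z] does not end with [s], consider the one-step shift of finite
   type in which [z] may be followed by any letter and every other [a] only by
   [y] or [x], according to whether the letter before [s] in [sigma a] is the one
   in [sigma y]. The extension graph of the empty word is a tree, and [s p] is a
   bispecial extended image of it; but no edge of the extension graph of [s p]
   leaves the set made of the letter before [s] in [sigma y] and the letter after
   [p] in [sigma y], so that graph is disconnected. The case of a [sigma z] not
   beginning with [p] is symmetric. Hence every element of [T^-(sigma)] is a
   suffix of every image, every element of [T^+(sigma)] a prefix of every image,
   and both sets are singletons. *)

From mathcomp Require Import all_boot all_algebra.
From mathcomp Require Import boolp zify.
Set Implicit Arguments. Unset Strict Implicit. Unset Printing Implicit Defensive.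
Import GRing.Theory.

Section Windows.
Variable T : Type.
Implicit Types (x : int -> T) (X : (int -> T) -> Prop) (w : seq T).

Lemma size_window x i m : size (window x i m) = m.
Proof. by rewrite size_map size_iota. Qed.

Lemma window_cat x i m n :
  window x i (m + n) = window x i m ++ window x (i + m%:Z)%R n.
Proof.
rewrite /window iotaD map_cat; congr (_ ++ _).
rewrite add0n -[m in iota m _]addn0 iotaDl -map_comp; apply: eq_map => k /=.
by rewrite PoszD addrA.
Qed.

Lemma window_cons x i m : window x i m.+1 = x i :: window x (i + 1)%R m.
Proof. by rewrite -add1n window_cat /window /= addr0. Qed.

Lemma window_rcons x i m :
  window x i m.+1 = rcons (window x i m) (x (i + m%:Z)%R).
Proof. by rewrite -addn1 window_cat /window /= addr0 cats1. Qed.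

Lemma window_shiftk x k i m : window (shiftk k x) i m = window x (i + k)%R m.
Proof. by apply: eq_map => j; rewrite /shiftk addrAC. Qed.

Lemma lang_window X x i m : X x -> lang X (window x i m).
Proof. by move=> Xx; exists x; split; last by exists i; rewrite size_window. Qed.

Lemma lang_infix X w1 w w2 : lang X (w1 ++ w ++ w2) -> lang X w.
Proof.
move=> [x [Xx [i]]]; rewrite !size_cat !window_cat => E.
exists x; split=> //; exists (i + (size w1)%:Z)%R.
move/(congr1 (take (size w) \o drop (size w1))): E => /=.
by rewrite !drop_size_cat ?size_window // !take_size_cat ?size_window.
Qed.

Lemma lang_nil X w : lang X w -> lang X [::].
Proof. by move=> Lw; apply: (@lang_infix _ w _ [::]); rewrite !cats0. Qed.

Lemma lang_rcons_ext X w : lang X w -> exists b, lang X (rcons w b).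
Proof.
move=> [x [Xx [i E]]]; exists (x (i + (size w)%:Z)%R).
by exists x; split=> //; exists i; rewrite size_rcons window_rcons -E.
Qed.

Lemma lang_cons_ext X w : lang X w -> exists a, lang X (a :: w).
Proof.
move=> [x [Xx [i E]]]; exists (x (i - 1)%R).
by have := lang_window (i - 1)%R (size w).+1 Xx; rewrite window_cons subrK -E.
Qed.

Lemma lang_consP X c w : lang X (c :: w) <-> exists d, lang X (c :: rcons w d).
Proof.
split=> [/lang_rcons_ext [d] | [d cwd]]; first by exists d.
by apply: (@lang_infix _ [::] _ [:: d]); rewrite cats1.
Qed.

Lemma lang_rconsP X w d : lang X (rcons w d) <-> exists c, lang X (c :: rcons w d).
Proof.
split=> [/lang_cons_ext [c] | [c cwd]]; first by exists c.
by apply: (@lang_infix _ [:: c] _ [::]); rewrite cats0.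
Qed.

End Windows.

Section CommonPrefix.
Variable T : eqType.
Implicit Types (s t u v : seq T) (z : T).

Lemma prefix_size s t : prefix s t -> size s <= size t.
Proof. by move=> /prefixP [r ->]; rewrite size_cat leq_addr. Qed.

Lemma prefix_size_eq s t : prefix s t -> size t <= size s -> s = t.
Proof.
move=> /prefixP [r ->]; rewrite size_cat => le.
by rewrite (@size0nil _ r) ?cats0 //; lia.
Qed.

Lemma prefix_anti s t : prefix s t -> prefix t s -> s = t.
Proof. by move=> st /prefix_size; apply: prefix_size_eq. Qed.

Lemma suffix_anti s t : suffix s t -> suffix t s -> s = t.
Proof. by move=> st ts; apply: (can_inj revK); apply: prefix_anti. Qed.

Lemma prefix_lcpl u v : prefix (lcp u v) u.
Proof.
elim: u v => [|x u IH] [|y v] //=; case: eqP => // _.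
by rewrite /= eqxx IH.
Qed.

Lemma prefix_lcpr u v : prefix (lcp u v) v.
Proof.
elim: u v => [|x u IH] [|y v] //=; case: eqP => // ->.
by rewrite /= eqxx IH.
Qed.

Lemma lcpC u v : lcp u v = lcp v u.
Proof.
elim: u v => [|x u IH] [|y v] //=; rewrite eq_sym.
by case: eqP => // ->; rewrite IH.
Qed.

Lemma prefix_lcp t u v : prefix t u -> prefix t v -> prefix t (lcp u v).
Proof.
elim: t u v => [|x t IH] [|y u] [|z v] //; first by rewrite !prefix0s.
rewrite !prefix_cons => /andP[/eqP <- tu] /andP[/eqP <- tv] /=.
by rewrite eqxx prefix_cons eqxx IH.
Qed.

Lemma lcp_nth_neq z u v : size (lcp u v) < size u -> size (lcp u v) < size v ->
  nth z u (size (lcp u v)) != nth z v (size (lcp u v)).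
Proof.
elim: u v => [|x u IH] [|y v] //=; case: eqP => [_|/eqP //].
by rewrite /= !ltnS; apply: IH.
Qed.

Lemma lcp_prefix_nth z p u v : prefix p u -> prefix p v ->
  nth z u (size p) != nth z v (size p) -> lcp u v = p.
Proof.
move=> /prefixP [u' ->] /prefixP [v' ->]; rewrite !nth_cat ltnn subnn.
elim: p => [|x p IH] /=; last by rewrite eqxx => /IH ->.
by case: u' v' => [|x u'] [|y v'] //= /negbTE ->.
Qed.

Lemma suffix_lcsl u v : suffix (lcs u v) u.
Proof. by rewrite suffix_revLR prefix_lcpl. Qed.

Lemma suffix_lcsr u v : suffix (lcs u v) v.
Proof. by rewrite suffix_revLR prefix_lcpr. Qed.

Lemma lcsC u v : lcs u v = lcs v u.
Proof. by rewrite /lcs lcpC. Qed.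

Lemma suffix_lcs t u v : suffix t u -> suffix t v -> suffix t (lcs u v).
Proof. by move=> tu tv; rewrite /lcs -prefix_rev revK; apply: prefix_lcp. Qed.

Lemma lcs_suffix_nth z s u v : suffix s u -> suffix s v ->
  nth z (rev u) (size s) != nth z (rev v) (size s) -> lcs u v = s.
Proof.
move=> su sv neq; rewrite /lcs (@lcp_prefix_nth z (rev s)) ?revK ?size_rev //.
Qed.

Lemma suffix_cons_nth z s u : suffix s u -> size s < size u ->
  suffix (nth z (rev u) (size s) :: s) u.
Proof.
move=> /suffixP [r ->]; case/lastP: r => [|r c]; first by rewrite ltnn.
by rewrite rev_cat rev_rcons nth_cat size_rev ltnn subnn /= cat_rcons suffix_suffix.
Qed.

End CommonPrefix.

Lemma eq_cat_le (T : Type) (s1 t1 s2 t2 : seq T) :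
  s1 ++ t1 = s2 ++ t2 -> size s1 <= size s2 -> exists r, s2 = s1 ++ r /\ t1 = r ++ t2.
Proof.
elim: s1 s2 => [|x s1 IH] [|y s2] //=.
- by move=> ->; exists [::].
- by move=> ->; exists (y :: s2).
- case=> -> /IH IHs; rewrite ltnS => /IHs [r [Es Et]].
  by exists r; rewrite Es Et.
Qed.

Section FlattenMkseq.
Variables (T : Type) (f : nat -> seq T).

Lemma size_flatten_mkseq n : size (flatten (mkseq f n)) = \sum_(k < n) size (f k).
Proof.
elim: n => [|n IH]; first by rewrite big_ord0.
by rewrite mkseqS -cats1 flatten_cat size_cat big_ord_recr IH /= cats0.
Qed.

Lemma leq_size_flatten_mkseq n : (forall k, 0 < size (f k)) -> n <= size (flatten (mkseq f n)).
Proof.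
move=> f_gt0; rewrite size_flatten_mkseq -[X in X <= _]card_ord -sum1_card.
by apply: leq_sum => k _; apply: f_gt0.
Qed.

Lemma nth_flatten_mkseq t0 n m i : n < m -> i < size (f n) ->
  nth t0 (flatten (mkseq f m)) (size (flatten (mkseq f n)) + i) = nth t0 (f n) i.
Proof.
move=> /subnKC <- lt_i; rewrite /mkseq iotaD map_cat flatten_cat nth_cat.
rewrite -/(mkseq f n) -/(mkseq f n.+1) mkseqS -cats1 flatten_cat size_cat /= cats0.
by rewrite ltn_add2l lt_i nth_cat ltnNge leq_addr /= addKn.
Qed.

End FlattenMkseq.

Section Image.
Variables (A B : Type) (sigma : A -> seq B).

Lemma morph_cat u v : morph sigma (u ++ v) = morph sigma u ++ morph sigma v.
Proof. by rewrite /morph map_cat flatten_cat. Qed.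

Lemma morph_cons a u : morph sigma (a :: u) = sigma a ++ morph sigma u.
Proof. by []. Qed.

Lemma morph_rcons u a : morph sigma (rcons u a) = morph sigma u ++ sigma a.
Proof. by rewrite -cats1 morph_cat /morph /= cats0. Qed.

Lemma img_pos_succ x j :
  img_pos sigma x (j + 1) = (img_pos sigma x j + (size (sigma (x j)))%:Z)%R.
Proof.
case: j => [n|[|m]].
- have -> : (Posz n + 1)%R = Posz n.+1 by lia.
  by rewrite /img_pos big_ord_recr /= PoszD.
- have -> : (Negz 0 + 1)%R = Posz 0 by lia.
  by rewrite /img_pos big_ord0 big_ord1 addNr.
- have -> : (Negz m.+1 + 1)%R = Negz m by lia.
  by rewrite /img_pos [in RHS]big_ord_recr /= PoszD opprD -addrA addNr addr0.
Qed.

Lemma is_img_window x z : is_img sigma x z -> forall j m,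
  window z (img_pos sigma x j) (size (morph sigma (window x j m)))
  = morph sigma (window x j m).
Proof.
move=> zx j m; elim: m j => [|m IH] j //.
by rewrite window_cons size_cat window_cat zx -img_pos_succ IH.
Qed.

Hypothesis sigma_ne : non_erasing sigma.

Lemma size_image_gt0 a : 0 < size (sigma a).
Proof. by move: (@sigma_ne a); case: (sigma a). Qed.

Lemma size_morph u : size u <= size (morph sigma u).
Proof.
elim: u => [|a u IH] //; rewrite morph_cons size_cat /=.
by have := size_image_gt0 a; lia.
Qed.

Lemma img_pos_le x t : exists j, (img_pos sigma x j <= t)%R.
Proof.
case: t => [n|n]; first by exists (Posz 0); rewrite /img_pos big_ord0.
exists (Negz n); rewrite /img_pos.
have : n.+1 <= \sum_(k < n.+1) size (sigma (x (Negz k))).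
  by rewrite -[X in X <= _]card_ord -sum1_card; apply: leq_sum => k _; apply: size_image_gt0.
by move: (\sum_(k < _) _) => S; lia.
Qed.

Lemma lang_image_factor X w : lang (image_shift sigma X) w ->
  exists u al be, lang X u /\ morph sigma u = al ++ w ++ be.
Proof.
move=> [_ [[x [Xx [k [_ [z [zx ->]]]]]] [i]]]; rewrite window_shiftk => Ew.
have [j le_ji] := img_pos_le x (i + k%:Z)%R.
set d := absz (i + k%:Z - img_pos sigma x j)%R.
set u := window x j (d + size w).
have le_u : d + size w <= size (morph sigma u).
  by have := size_morph u; rewrite size_window.
exists u, (window z (img_pos sigma x j) d),
  (window z (img_pos sigma x j + (d + size w)%:Z)%R (size (morph sigma u) - (d + size w))).
split; first exact: lang_window.
have E := is_img_window zx j (d + size w); rewrite -/u -{1}(subnKC le_u) in E.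
rewrite !window_cat in E.
have Pd : (img_pos sigma x j + d%:Z)%R = (i + k%:Z)%R by rewrite /d; lia.
by rewrite -{1}E Pd -Ew PoszD addrA Pd catA.
Qed.

(* Position [k >= 0] of the image is read in sigma(x_0)...sigma(x_k), position
   [-k-1] in the mirror image of sigma(x_-k-1)...sigma(x_-1); both have length > k. *)
Definition image_word (b0 : B) (x : int -> A) : int -> B := fun n =>
  match n with
  | Posz k => nth b0 (flatten (mkseq (fun i => sigma (x (Posz i))) k.+1)) k
  | Negz k => nth b0 (flatten (mkseq (fun i => rev (sigma (x (Negz i)))) k.+1)) k
  end.

Lemma image_word_is_img b0 x : is_img sigma x (image_word b0 x).
Proof.
case=> [n|n]; apply: (@eq_from_nth _ b0); rewrite size_window // => i lt_i;
  rewrite /window (nth_map 0) ?size_iota // nth_iota // add0n /img_pos.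
- set f := fun k => sigma (x (Posz k)).
  have le_n : n <= size (flatten (mkseq f n)).
    by apply: leq_size_flatten_mkseq => k; apply: size_image_gt0.
  have -> k : image_word b0 x (Posz k) = nth b0 (flatten (mkseq f k.+1)) k by [].
  rewrite -(size_flatten_mkseq f) nth_flatten_mkseq //.
  by rewrite ltnS (leq_trans le_n) ?leq_addr.
- set g := fun k => rev (sigma (x (Negz k))).
  have le_n : n <= size (flatten (mkseq g n)).
    by apply: leq_size_flatten_mkseq => k; rewrite size_rev size_image_gt0.
  have -> : \sum_(k < n.+1) size (sigma (x (Negz k))) = size (flatten (mkseq g n.+1)).
    by rewrite size_flatten_mkseq; apply: eq_bigr => k _; rewrite size_rev.
  rewrite mkseqS -cats1 flatten_cat size_cat /= cats0 size_rev.
  set S := size _ in le_n *; set m := size _ in lt_i *.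
  have -> : (- Posz (S + m) + Posz i)%R = Negz (S + (m - i.+1)) by lia.
  have -> k : image_word b0 x (Negz k) = nth b0 (flatten (mkseq g k.+1)) k by [].
  rewrite nth_flatten_mkseq ?size_rev; try lia.
  by rewrite nth_rev -/m; [congr nth; lia | lia].
Qed.

Lemma factor_lang_image X u al w be : lang X u -> morph sigma u = al ++ w ++ be ->
  lang (image_shift sigma X) w.
Proof.
move=> [x [Xx [j Eu]]] E.
case: (sigma (x 0%R)) (@sigma_ne (x 0%R)) => [//|b0 _ _].
exists (shiftk 0 (image_word b0 x)); split.
  exists x; split=> //; exists 0; split; first exact: size_image_gt0.
  by exists (image_word b0 x); split=> //; apply: image_word_is_img.
exists (img_pos sigma x j + (size al)%:Z)%R; rewrite window_shiftk addr0.
have := is_img_window (image_word_is_img b0 x) j (size u).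
rewrite -Eu E !size_cat !window_cat.
by move/(congr1 (take (size w) \o drop (size al))) => /=;
  rewrite !drop_size_cat ?size_window // !take_size_cat ?size_window.
Qed.

End Image.

Section StronglyLeftProper.
Variables (A : Type) (B : eqType) (sigma : A -> seq B) (l : B).
Hypothesis slp : strongly_left_proper_with sigma l.

Lemma slp_non_erasing : non_erasing sigma.
Proof. by move=> a; have [[w ->] _] := slp a. Qed.

Lemma notin_behead_image a : l \notin behead (sigma a).
Proof.
have [[w Ew] /eqP] := slp a; rewrite Ew /= eqxx add1n eqSS.
by move/eqP/count_memPn.
Qed.

Lemma notin_proper_suffix a r t : sigma a = r ++ t -> r != [::] -> l \notin t.
Proof.
case: r => [|c r] // Ea _; have := notin_behead_image a.
by rewrite Ea /= mem_cat negb_or => /andP[].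
Qed.

Lemma notin_suffix_image a c t : suffix (c :: t) (sigma a) -> l \notin t.
Proof.
move=> /suffixP [r Ea]; apply: (@notin_proper_suffix a (rcons r c)).
  by rewrite cat_rcons.
by case: (r).
Qed.

Lemma notin_prefix_image b p' : prefix (l :: p') (sigma b) -> l \notin p'.
Proof.
move=> /prefixP [r Eb]; have := notin_behead_image b.
by rewrite Eb /= mem_cat negb_or => /andP[].
Qed.

Lemma nth0_cat_morph r v : nth l (r ++ morph sigma v) 0 = nth l r 0.
Proof.
case: r => [|c r] //; case: v => [|a v] //.
by have [[w Ea] _] := slp a; rewrite morph_cons Ea.
Qed.

Lemma morph_sync x al w : morph sigma x = al ++ l :: w ->
  exists x1 x2, [/\ x = x1 ++ x2, morph sigma x1 = al & morph sigma x2 = l :: w].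
Proof.
elim: x al => [|a x IH] [|c al] // E; first by exists [::], (a :: x).
rewrite morph_cons in E; have [le|lt] := leqP (size (sigma a)) (size (c :: al)).
  have [r [Eal Ex]] := eq_cat_le E le.
  have [x1 [x2 [-> E1 E2]]] := IH _ Ex.
  by exists (a :: x1), x2; rewrite morph_cons E1 Eal.
have [r [Ea Er]] := eq_cat_le (esym E) (ltnW lt).
case: r Ea Er lt => [|d r] Ea Er lt; first by rewrite Ea cats0 ltnn in lt.
case: Er => ld _; have := notin_behead_image a.
by rewrite Ea -ld /= mem_cat in_cons eqxx orbT.
Qed.

Lemma suffix_image_last x a al c t : l \notin t ->
  morph sigma (rcons x a) = al ++ c :: t -> suffix (c :: t) (sigma a).
Proof.
rewrite morph_rcons => lt E; have := congr1 size E; rewrite !size_cat => Esize.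
have [le|gt] := leqP (size (c :: t)) (size (sigma a)).
  have le' : size (morph sigma x) <= size al by lia.
  by have [r [_ ->]] := eq_cat_le E le'; apply: suffix_suffix.
have le' : size al <= size (morph sigma x) by lia.
have [[|d r] [_ Er]] := eq_cat_le (esym E) le'; first by rewrite Er ltnn in gt.
case: Er => _ Et; have [[w Ea] _] := slp a.
by move: lt; rewrite Et Ea mem_cat in_cons eqxx orbT.
Qed.

Definition letter_before (s : seq B) (a : A) : B := nth l (rev (sigma a)) (size s).

(* The default [l] is meaningful: past the end of [sigma b] an image word
   continues with the first letter [l] of the next image. *)
Definition letter_after (p : seq B) (b : A) : B := nth l (sigma b) (size p).

Lemma suffix_letter_before s c a : suffix (c :: s) (sigma a) -> letter_before s a = c.
Proof.
rewrite /letter_before => /suffixP [r ->].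
by rewrite rev_cat rev_cons nth_cat size_rcons size_rev ltnSn nth_rcons size_rev ltnn eqxx.
Qed.

Lemma prefix_image_first b x p' d be : l \notin p' ->
  morph sigma (b :: x) = (l :: p') ++ d :: be ->
  prefix (l :: p') (sigma b) /\ d = letter_after (l :: p') b.
Proof.
rewrite morph_cons => lp E; have := congr1 size E; rewrite !size_cat => Esize.
have [le|gt] := leqP (size (l :: p')) (size (sigma b)).
  have [r [Eb Er]] := eq_cat_le (esym E) le.
  split; first by rewrite Eb prefix_prefix.
  by rewrite /letter_after Eb nth_cat ltnn subnn -(nth0_cat_morph _ x) -Er.
have [[|e r] [Ep Ex]] := eq_cat_le E (ltnW gt); first by rewrite Ep cats0 ltnn in gt.
have el : e = l by have := nth0_cat_morph [::] x; rewrite /= Ex.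
have [[w Eb] _] := slp b; move: lp; rewrite Eb in Ep; case: Ep => ->.
by rewrite mem_cat -el in_cons eqxx orbT.
Qed.

Lemma letter_after_cat p b b' : prefix p (sigma b) ->
  exists w, sigma b ++ sigma b' = p ++ letter_after p b :: w.
Proof.
move=> /prefixP [r Eb]; have [[w Eb'] _] := slp b'.
rewrite /letter_after Eb Eb' nth_cat ltnn subnn -catA.
by case: r {Eb} => [|e r]; [exists w | exists (r ++ l :: w)].
Qed.

End StronglyLeftProper.

Section Extensions.
Variables (A : Type) (B : eqType) (sigma : A -> seq B) (l : B).
Hypotheses (slp : strongly_left_proper_with sigma l) (inj : injective (morph sigma)).
Variables (X : (int -> A) -> Prop) (s p' : seq B).
Hypotheses (ls : l \notin s) (lp : l \notin p').

Lemma image_extP v c d :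
  lang (image_shift sigma X) (c :: rcons (s ++ morph sigma v ++ l :: p') d) <->
  exists a b, [/\ lang X (a :: rcons v b), suffix (c :: s) (sigma a),
                  prefix (l :: p') (sigma b) & d = letter_after sigma l (l :: p') b].
Proof.
have sigma_ne := slp_non_erasing slp; split; last first.
  move=> [a [b [/lang_rcons_ext [b' Lx] /suffixP [r Ea] + ->]]].
  move=> /(letter_after_cat slp b') [w Eb].
  apply: (factor_lang_image sigma_ne Lx (al := r) (be := w)).
  rewrite morph_rcons morph_cons morph_rcons Ea -!catA Eb -cats1 /=.
  by rewrite -!catA.
move=> /(lang_image_factor sigma_ne) [x [al [be [Lx E]]]].
have [w Ew] : exists w, morph sigma v ++ l :: p' ++ d :: be = l :: w.
  case: (v) => [|a v']; first by eexists.
  by have [[w Ea] _] := slp a; rewrite morph_cons Ea; eexists.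
have E' : morph sigma x = (al ++ c :: s) ++ l :: w.
  by rewrite E -Ew -cats1 /= -!catA.
(* Cut at the [l] that follows [c :: s], then right after [sigma v]. *)
have [x1 [x2 [Ex E1 E2]]] := morph_sync slp E'.
case/lastP: x1 Ex E1 => [|x1 a] Ex E1; first by case: (al) E1.
rewrite -Ew in E2; have [v' [x4 [Ex2 /inj Ev E4]]] := morph_sync slp E2.
case: x4 Ex2 E4 => [|b x5] Ex2 E4; first by [].
have [pb ->] := prefix_image_first slp lp E4.
exists a, b; split=> //; last exact: suffix_image_last E1.
apply: (@lang_infix _ _ x1 _ x5); move: Lx.
by rewrite Ex Ex2 Ev cat_rcons -cats1 /= -!catA.
Qed.

End Extensions.

Section Letters.
Variables (A B : eqType) (sigma : A -> seq B) (l : B).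
Hypotheses (slp : strongly_left_proper_with sigma l) (inj : injective (morph sigma)).

Lemma image_inj : injective sigma.
Proof. by move=> a a' E; have [] : [:: a] = [:: a'] by apply: inj; rewrite /morph /= E. Qed.

Lemma lcs_proper_suffix a1 a2 : a1 != a2 -> size (lcs (sigma a1) (sigma a2)) < size (sigma a1).
Proof.
move=> neq; have /suffixP [[|c r] /= E1] := suffix_lcsl (sigma a1) (sigma a2); last first.
  by rewrite [in X in _ < X]E1 /= size_cat ltnS leq_addl.
have /suffixP [[|d r] E2] := suffix_lcsr (sigma a1) (sigma a2).
  by move: neq; rewrite (image_inj (etrans E1 (esym E2))) eqxx.
have := notin_proper_suffix slp E2 isT; rewrite -E1.
by have [[w ->] _] := slp a1; rewrite in_cons eqxx.
Qed.

Lemma suffix_letter_before_lcs a1 a2 : a1 != a2 ->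
  suffix (letter_before sigma l (lcs (sigma a1) (sigma a2)) a1 :: lcs (sigma a1) (sigma a2))
         (sigma a1).
Proof. by move=> neq; apply: suffix_cons_nth (suffix_lcsl _ _) (lcs_proper_suffix neq). Qed.

Lemma letter_before_lcs_neq a1 a2 : a1 != a2 ->
  letter_before sigma l (lcs (sigma a1) (sigma a2)) a1
  != letter_before sigma l (lcs (sigma a1) (sigma a2)) a2.
Proof.
move=> neq; have lt1 := lcs_proper_suffix neq.
have lt2 : size (lcs (sigma a1) (sigma a2)) < size (sigma a2).
  by rewrite lcsC; apply: lcs_proper_suffix; rewrite eq_sym.
move: lt1 lt2; rewrite /letter_before /lcs !size_rev => lt1 lt2.
by apply: lcp_nth_neq; rewrite size_rev.
Qed.

Lemma lcp_images_cons b1 b2 : exists p', lcp (sigma b1) (sigma b2) = l :: p'.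
Proof.
by have [[w1 ->] _] := slp b1; have [[w2 ->] _] := slp b2; rewrite /= eqxx; eexists.
Qed.

Lemma letter_after_neq_l p b : 0 < size p < size (sigma b) -> letter_after sigma l p b != l.
Proof.
move=> /andP[p0 lt]; have := notin_behead_image slp b; rewrite /letter_after.
have [[w Eb] _] := slp b; rewrite Eb /= in lt *; rewrite -(prednK p0) /=.
by apply: contraNneq => <-; rewrite mem_nth // -ltnS prednK.
Qed.

Lemma letter_after_lcp_neq b1 b2 : b1 != b2 ->
  letter_after sigma l (lcp (sigma b1) (sigma b2)) b1
  != letter_after sigma l (lcp (sigma b1) (sigma b2)) b2.
Proof.
move=> neq; set p := lcp _ _.
have p1 := prefix_lcpl (sigma b1) (sigma b2); have p2 := prefix_lcpr (sigma b1) (sigma b2).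
have p0 : 0 < size p by have [p' Ep] := lcp_images_cons b1 b2; rewrite /p Ep.
have [lt1|ge1] := ltnP (size p) (size (sigma b1));
  have [lt2|ge2] := ltnP (size p) (size (sigma b2)).
- exact: lcp_nth_neq.
- rewrite {2}/letter_after nth_default //.
  by apply: letter_after_neq_l; rewrite p0.
- rewrite eq_sym {2}/letter_after nth_default //.
  by apply: letter_after_neq_l; rewrite p0.
- have E12 := etrans (esym (prefix_size_eq p1 ge1)) (prefix_size_eq p2 ge2).
  by rewrite (image_inj E12) eqxx in neq.
Qed.

End Letters.

Lemma next_prev_neq (T : eqType) (c : seq T) x :
  uniq c -> 2 < size c -> x \in c -> next c x != prev c x.
Proof.
move=> uc sc /rot_to [i q Ec].
have /andP[xq uq] : uniq (x :: q) by rewrite -Ec rot_uniq.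
have sq : 1 < size q by move: sc; rewrite -(size_rot i) Ec.
rewrite -(next_rot i uc) -(prev_rot i uc) Ec next_nth prev_nth mem_head (memNindex xq).
case: q {Ec} xq uq sq => [|y [|w r]] // _ /andP[yr _] _ /=; rewrite eqxx /=.
have := nth_last x (w :: r); rewrite /= => ->.
by apply: contraNneq yr => ->; apply: mem_last.
Qed.

Lemma is_tree_iso (V W : finType) (vert : pred V) (e : rel V) (vert' : pred W)
    (e' : rel W) (f : V -> W) :
  injective f -> (forall v, vert' (f v) = vert v) ->
  (forall w, vert' w -> exists v, w = f v) -> (forall u v, e' (f u) (f v) = e u v) ->
  is_tree vert e -> is_tree vert' e'.
Proof.
move=> f_inj f_vert f_onto f_edge [[v0 v0V] conn acyc].
have e_f : relpre f e' =2 e by move=> u v /=; rewrite f_edge.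
split; first by exists (f v0); rewrite f_vert.
- move=> _ _ /[dup] /f_onto [u ->] + /[dup] /f_onto [v ->]; rewrite !f_vert => uV vV.
  have /connectP [q q_path ->] := conn _ _ uV vV.
  by apply/connectP; exists (map f q); rewrite ?last_map // path_map (eq_path e_f).
- move=> [c' [sc' c'V uc' cc']]; apply: acyc.
  have [c Ec] : exists c, c' = map f c.
    elim: c' c'V {sc' uc' cc'} => [|w c' IH] /=; first by exists [::].
    by move=> /andP[/f_onto [v ->] /IH [c ->]]; exists (v :: c).
  move: sc' c'V uc' cc'; rewrite Ec size_map all_map (map_inj_uniq f_inj).
  rewrite cycle_map (eq_cycle e_f) => sc cV uc cc; exists c; split=> //.
  by apply/allP => v /(allP cV); rewrite /= f_vert.
Qed.

Definition bigraph (A B : finType) (F : A -> B -> bool) : rel (A + B) :=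
  fun u v => match u, v with
  | inl a, inr b | inr b, inl a => F a b
  | _, _ => false
  end.

Lemma bigraph_sym (A B : finType) (F : A -> B -> bool) : symmetric (bigraph F).
Proof. by case=> [a|b] [a'|b']. Qed.

Lemma bigraph_swap_tree (A B : finType) (F : A -> B -> bool) :
  is_tree predT (bigraph F) -> is_tree predT (bigraph (fun b a => F a b)).
Proof.
apply: (@is_tree_iso _ _ _ _ _ _ (fun u => match u with inl a => inr a | inr b => inl b end)).
- by case=> [a|b] [a'|b'] // [->].
- by [].
- by case=> [b|a] _; [exists (inr b) | exists (inl a)].
- by case=> [a|b] [a'|b'].
Qed.

(* A star centred at [inl z] with a pendant edge at every other [inl a]: these
   leaves lie on no cycle, so a right vertex on a cycle would have two distinct
   neighbours on it, both equal to [inl z]. *)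
Lemma hub_tree (A B : finType) (z : A) (g : A -> B) :
  is_tree predT (bigraph (fun a b => (a == z) || (b == g a))).
Proof.
set e := bigraph _.
have hub_conn v : connect e (inl z) v.
  case: v => [a|b]; last by apply: connect1; rewrite /= eqxx.
  apply: (@connect_trans _ _ (inr (g a))); apply: connect1; first by rewrite /= eqxx.
  by rewrite /= eqxx orbT.
split; first by exists (inl z).
  move=> u v _ _; apply: connect_trans (hub_conn v).
  by rewrite (sym_connect_sym (@bigraph_sym _ _ _)).
move=> [c [sc _ uc cc]].
have nbrs v : v \in c -> [/\ e v (next c v), e v (prev c v), next c v \in c & prev c v \in c].
  move=> vc; rewrite mem_next mem_prev vc next_cycle // /e bigraph_sym.
  by split=> //; apply: prev_cycle.
have hub_only a : inl a \in c -> a = z.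
  move=> /[dup] ac /nbrs []; have := next_prev_neq uc sc ac.
  case: (next c (inl a)) => // b1; case: (prev c (inl a)) => // b2 /= neq eb1 eb2 _ _.
  apply/eqP; apply: contraNT neq => az.
  by move: eb1 eb2; rewrite (negbTE az) /= => /eqP -> /eqP ->.
have [b bc] : exists b, inr b \in c.
  case: c sc cc uc nbrs hub_only => [|v c] // _ _ _ nbrs _.
  case: v nbrs => [a|b] nbrs; last by exists b; rewrite mem_head.
  have [] := nbrs (inl a) (mem_head _ _); case: (next _ _) => // b _ _ bc _.
  by exists b.
have [] := nbrs _ bc; have := next_prev_neq uc sc bc.
case: (next c (inr b)) => [a1|//]; case: (prev c (inr b)) => [a2|//] neq _ _.
by move=> /hub_only e1 /hub_only e2; rewrite e1 e2 eqxx in neq.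
Qed.

Section ShiftOfFiniteType.
Variables (A : finType) (F : rel A).
Hypotheses (F_total : forall a, exists b, F a b) (F_onto : forall b, exists a, F a b).

Definition sft : (int -> A) -> Prop := fun x => forall n, F (x n) (x (n + 1)%R).

Let succ a := xchoose (F_total a).
Let pred b := xchoose (F_onto b).

Definition sft_path a b : int -> A := fun n =>
  match n with
  | Posz 0 => a
  | Posz k.+1 => iter k succ b
  | Negz m => iter m.+1 pred a
  end.

Lemma sft_path_sft a b : F a b -> sft (sft_path a b).
Proof.
move=> ab; case=> [[|k]|[|m]].
- by have -> : (Posz 0 + 1)%R = Posz 1 by lia.
- have -> : (Posz k.+1 + 1)%R = Posz k.+2 by lia.
  exact: (xchooseP (F_total _)).
- have -> : (Negz 0 + 1)%R = Posz 0 by lia.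
  exact: (xchooseP (F_onto _)).
- have -> : (Negz m.+1 + 1)%R = Negz m by lia.
  exact: (xchooseP (F_onto _)).
Qed.

Lemma sft_shift_space : shift_space sft.
Proof.
split.
- move=> x near n; have [y [Fy yx]] := near (absz n + 1).
  by rewrite -!yx; [apply: Fy | lia | lia].
- by move=> x; split=> xF n; [apply: xF | have := xF (n - 1)%R; rewrite /shiftk subrK].
- move=> a; have [b ab] := F_total a.
  by exists (sft_path a b); split; [apply: sft_path_sft | exists (Posz 0)].
Qed.

Lemma lang_sft2 a b : lang sft [:: a; b] <-> F a b.
Proof.
split=> [|ab]; last first.
  by exists (sft_path a b); split; [apply: sft_path_sft | exists (Posz 0)].
move=> [x [xF [i]]]; rewrite /window /= => -[-> ->].
by have -> : (i + Posz 0)%R = i by lia.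
Qed.

Lemma lang_sft1 a : lang sft [:: a].
Proof.
have [b /lang_sft2] := F_total a.
by rewrite -[[:: a; b]]/([::] ++ [:: a] ++ [:: b]) => /lang_infix.
Qed.

Lemma sft_nil_bispecial : 1 < #|A| -> bispecial (lang sft) [::].
Proof.
move=> A2; have [a [_ _]] := card_gt1P A2; split.
  exact: lang_nil (lang_sft1 a).
have [-> ->] : Eminus (lang sft) [::] = setT /\ Eplus (lang sft) [::] = setT.
  by split; apply/setP => b; rewrite !inE; apply/asboolP/lang_sft1.
by rewrite cardsT.
Qed.

Lemma sft_nil_dendric : is_tree predT (bigraph F) -> dendric (lang sft) [::].
Proof.
move=> tree; have [[v _] _ _] := tree; split.
  by case: v => a; apply: lang_nil (lang_sft1 a).
apply: (@is_tree_iso _ _ _ _ _ _ id) tree => //.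
- by case=> a; rewrite /= inE; apply/asboolP/lang_sft1.
- by move=> w _; exists w.
- by case=> [a|b] [a'|b'] //=; apply: asbool_equiv_eqP idP (lang_sft2 _ _).
Qed.

End ShiftOfFiniteType.

Lemma offdiag_uniqueP (T : finType) (R : Type) (f : T -> T -> R) : 1 < #|T| ->
  (exists! r, exists x y, x != y /\ r = f x y) <->
  (forall x y x' y', x != y -> x' != y' -> f x y = f x' y').
Proof.
move=> /card_gt1P [x0 [y0 [_ _ n0]]]; split.
  move=> [r [_ U]] x y x' y' n n'.
  have <- : r = f x y by apply: U; exists x, y.
  by apply: U; exists x', y'.
by move=> C; exists (f x0 y0); split=> [|_ [x [y [n ->]]]]; [exists x0, y0 | apply: C].
Qed.

Lemma exists_neq (T : finType) (x : T) : 1 < #|T| -> exists y, x != y.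
Proof.
move=> /card_gt1P [x1 [x2 [_ _ n12]]].
by case: (eqVneq x x1) => [->|n]; [exists x2 | exists x1].
Qed.

Lemma dendric_transfer (A B : finType) (X : (int -> A) -> Prop) (Y : (int -> B) -> Prop)
    v u (f g : A -> B) :
  injective f -> injective g -> lang Y u ->
  (forall c d, lang Y (c :: rcons u d) <->
               exists a b, [/\ lang X (a :: rcons v b), c = f a & d = g b]) ->
  dendric (lang X) v -> dendric (lang Y) u.
Proof.
move=> f_inj g_inj Lu ext [_ tree]; split=> //.
pose h w := match w with inl a => inl (f a) | inr b => inr (g b) end.
apply: (@is_tree_iso _ _ _ _ _ _ h) tree.
- by case=> [a|b] [a'|b'] //= [E]; rewrite ?(f_inj _ _ E) ?(g_inj _ _ E).
- case=> [a|b] /=; rewrite !inE; apply: asbool_equiv_eq.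
    rewrite !lang_consP; split=> [[d /ext [a' [b [L /f_inj -> _]]]]|[b L]]; first by exists b.
    by exists (g b); apply/ext; exists a, b.
  rewrite !lang_rconsP; split=> [[c /ext [a [b' [L _ /g_inj ->]]]]|[a L]]; first by exists a.
  by exists (f a); apply/ext; exists a, b.
- case=> [c|d] /=; rewrite inE => /asboolP.
    by move=> /lang_consP [d /ext [a [b [_ -> _]]]]; exists (inl a).
  by move=> /lang_rconsP [c /ext [a [b [_ _ ->]]]]; exists (inr b).
- case=> [a|b] [a'|b'] //=; apply: asbool_equiv_eq; rewrite /Eboth ext.
    by split=> [[a1 [b1 [L /f_inj -> /g_inj ->]]] | L] //; exists a, b'.
  by split=> [[a1 [b1 [L /f_inj -> /g_inj ->]]] | L] //; exists a', b.
Qed.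

Section Forward.
Variables (A B : finType) (sigma : A -> seq B) (l : B).
Hypotheses (slp : strongly_left_proper_with sigma l) (inj : injective (morph sigma)).

Lemma letter_before_inj s : (forall a1 a2, a1 != a2 -> lcs (sigma a1) (sigma a2) = s) ->
  injective (letter_before sigma l s).
Proof.
move=> lcs_s a a' E; apply/eqP; apply: contraT => n.
by have := letter_before_lcs_neq slp inj n; rewrite lcs_s // E eqxx.
Qed.

Lemma letter_after_inj p : (forall b1 b2, b1 != b2 -> lcp (sigma b1) (sigma b2) = p) ->
  injective (letter_after sigma l p).
Proof.
move=> lcp_p b b' E; apply/eqP; apply: contraT => n.
by have := letter_after_lcp_neq slp inj n; rewrite lcp_p // E eqxx.
Qed.

Section ExtendedImage.
Variables (X : (int -> A) -> Prop) (v : seq A) (s p' : seq B).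
Hypotheses (ls : l \notin s) (lp : l \notin p').
Let Y := image_shift sigma X.
Let u := s ++ morph sigma v ++ l :: p'.

Lemma left_special_lcs : 1 < #|Eminus (lang Y) u| ->
  exists a1 a2, a1 != a2 /\ lcs (sigma a1) (sigma a2) = s.
Proof.
move=> /card_gt1P [c1 [c2 []]]; rewrite !inE => /asboolP/lang_consP [d1 L1].
move=> /asboolP/lang_consP [d2 L2] n12.
have [a1 [_ [_ s1 _ _]]] := (image_extP slp inj X ls lp _ _ _).1 L1.
have [a2 [_ [_ s2 _ _]]] := (image_extP slp inj X ls lp _ _ _).1 L2.
move: n12; rewrite -(suffix_letter_before l s1) -(suffix_letter_before l s2) => n12.
exists a1, a2; split; first by apply: contraNneq n12 => ->.
apply: lcs_suffix_nth n12; [apply: suffix_trans s1 | apply: suffix_trans s2].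
  all: exact: suffix_cons.
Qed.

Lemma right_special_lcp : 1 < #|Eplus (lang Y) u| ->
  exists b1 b2, b1 != b2 /\ lcp (sigma b1) (sigma b2) = l :: p'.
Proof.
move=> /card_gt1P [d1 [d2 []]]; rewrite !inE => /asboolP/lang_rconsP [c1 L1].
move=> /asboolP/lang_rconsP [c2 L2] n12.
have [a1 [b1 [_ _ p1 e1]]] := (image_extP slp inj X ls lp _ _ _).1 L1.
have [a2 [b2 [_ _ p2 e2]]] := (image_extP slp inj X ls lp _ _ _).1 L2.
rewrite e1 e2 in n12; exists b1, b2; split; first by apply: contraNneq n12 => ->.
exact: lcp_prefix_nth n12.
Qed.

End ExtendedImage.

Lemma dendric_preserving_of_const X v : 1 < #|A| ->
  (forall a1 a2 a3 a4, a1 != a2 -> a3 != a4 ->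
     lcs (sigma a1) (sigma a2) = lcs (sigma a3) (sigma a4)) ->
  (forall b1 b2 b3 b4, b1 != b2 -> b3 != b4 ->
     lcp (sigma b1) (sigma b2) = lcp (sigma b3) (sigma b4)) ->
  dendric (lang X) v -> dendric_preserving sigma X v.
Proof.
move=> A2 lcs_const lcp_const Dv u [Lu [a0 [b0 [s [p [_ [s' [s'0 Ea0]] [p'' [p0 Eb0]] Eu]]]]]].
move=> [_ [left2 right2]]; subst u.
have ls := notin_proper_suffix slp Ea0 s'0.
have [p' Ep] : exists p', p = l :: p'.
  have [[w Eb] _] := slp b0; move: p0 Eb0; rewrite Eb.
  by case: (p) => // c q _ [-> _]; exists q.
subst p; have lp : l \notin p'.
  by apply: (notin_prefix_image slp (b := b0)); rewrite Eb0 prefix_prefix.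
have [a1 [a2 [n12 E12]]] := left_special_lcs ls lp left2.
have [b1 [b2 [m12 F12]]] := right_special_lcp ls lp right2.
have lcs_s a a' : a != a' -> lcs (sigma a) (sigma a') = s.
  by move=> n; rewrite -E12; apply: lcs_const.
have lcp_p b b' : b != b' -> lcp (sigma b) (sigma b') = l :: p'.
  by move=> n; rewrite -F12; apply: lcp_const.
apply: (dendric_transfer (letter_before_inj lcs_s) (letter_after_inj lcp_p) Lu _ Dv).
move=> c d; rewrite image_extP //; split.
  by move=> [a [b [L sa _ ->]]]; exists a, b; rewrite (suffix_letter_before l sa).
move=> [a [b [L -> ->]]]; exists a, b; split=> //.
  have [a' n] := exists_neq a A2; rewrite -(lcs_s _ _ n).
  exact: suffix_letter_before_lcs.
have [b' n] := exists_neq b A2; rewrite -(lcp_p _ _ n); exact: prefix_lcpl.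
Qed.

End Forward.

Section Backward.
Variables (A B : finType) (sigma : A -> seq B) (l : B).
Hypotheses (slp : strongly_left_proper_with sigma l) (inj : injective (morph sigma)).
Hypothesis preserving : forall X, shift_space X ->
  forall v, bispecial (lang X) v -> dendric (lang X) v -> dendric_preserving sigma X v.

Section Counterexample.
Variables (x y : A).
Hypothesis xy : x != y.
Let s := lcs (sigma x) (sigma y).
Let p := lcp (sigma x) (sigma y).

Let sx : suffix (letter_before sigma l s x :: s) (sigma x).
Proof. exact: suffix_letter_before_lcs. Qed.

Let sy : suffix (letter_before sigma l s y :: s) (sigma y).
Proof. by rewrite /s lcsC; apply: (suffix_letter_before_lcs slp inj); rewrite eq_sym. Qed.

Let before_neq : letter_before sigma l s x != letter_before sigma l s y.
Proof. exact: letter_before_lcs_neq. Qed.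

Let after_neq : letter_after sigma l p x != letter_after sigma l p y.
Proof. exact: letter_after_lcp_neq. Qed.

Section SftImage.
Variable F : rel A.
Hypotheses (F_total : forall a, exists b, F a b) (F_onto : forall b, exists a, F a b).
Hypotheses (F_tree : is_tree predT (bigraph F)) (Fxx : F x x) (Fyy : F y y).
Let Y := image_shift sigma (sft F).

Lemma sft_image_extP c d : lang Y (c :: rcons (s ++ p) d) <->
  exists a b, [/\ F a b, suffix (c :: s) (sigma a), prefix p (sigma b)
                & d = letter_after sigma l p b].
Proof.
have [p' Ep] := lcp_images_cons slp x y; rewrite /p Ep.
have lp : l \notin p' by apply: (notin_prefix_image slp (b := x)); rewrite -Ep prefix_lcpl.
have ls := notin_suffix_image slp sx.
move: (image_extP slp inj (sft F) ls lp [::] c d) => ->.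
by split=> [] [a [b [Lab sa pb ->]]]; exists a, b;
  split=> //; apply/(lang_sft2 F_total F_onto).
Qed.

Let ext_x : lang Y (letter_before sigma l s x :: rcons (s ++ p) (letter_after sigma l p x)).
Proof. by apply/sft_image_extP; exists x, x; rewrite sx /p prefix_lcpl. Qed.

Let ext_y : lang Y (letter_before sigma l s y :: rcons (s ++ p) (letter_after sigma l p y)).
Proof. by apply/sft_image_extP; exists y, y; rewrite sy /p prefix_lcpr. Qed.

Lemma sft_image_dendric : dendric (lang Y) (s ++ p).
Proof.
have Lu : lang Y (s ++ p).
  by move: ext_x; rewrite -cats1 -cat1s => /lang_infix.
have bisp_nil : bispecial (lang (sft F)) [::].
  by apply: (sft_nil_bispecial F_total F_onto); apply/card_gt1P; exists x, y.
have dend_nil := sft_nil_dendric F_total F_onto F_tree.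
apply: (preserving (sft_shift_space F_total F_onto) bisp_nil dend_nil).
  split=> //; exists x, x, s, p; split.
  - exact/(lang_sft2 F_total F_onto).
  - have /suffixP [r ->] := sx; exists (rcons r (letter_before sigma l s x)).
    by rewrite cat_rcons; split=> //; case: (r).
  - have /prefixP [r Ex] := prefix_lcpl (sigma x) (sigma y); exists r; split=> //.
    by rewrite /p; have [p' ->] := lcp_images_cons slp x y.
  - by [].
split=> //; split; apply/card_gt1P.
  exists (letter_before sigma l s x), (letter_before sigma l s y); rewrite !inE.
  by rewrite before_neq; split=> //; apply/asboolP/lang_consP; eexists; eassumption.
exists (letter_after sigma l p x), (letter_after sigma l p y); rewrite !inE.
by rewrite after_neq; split=> //; apply/asboolP/lang_rconsP; eexists; eassumption.
Qed.

Lemma sft_image_not_separated :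
  ~ (forall a b, F a b -> suffix s (sigma a) -> prefix p (sigma b) ->
       (letter_before sigma l s a == letter_before sigma l s y)
       = (letter_after sigma l p b == letter_after sigma l p y)).
Proof.
move=> sep; have [_ [_ conn _]] := sft_image_dendric.
pose S w := match w with
  | inl c => c == letter_before sigma l s y
  | inr d => d == letter_after sigma l p y
  end.
have S_closed : closed (ext_edge (lang Y) (s ++ p)) S.
  have S_edge a b c : F a b -> suffix (c :: s) (sigma a) -> prefix p (sigma b) ->
      S (inl c) = S (inr (letter_after sigma l p b)).
    move=> Fab sa pb; rewrite /= -(suffix_letter_before l sa).
    by apply: sep Fab (suffix_trans (suffix_cons _ _) sa) pb.
  move=> [c|d] [c'|d'] //= /asboolP /sft_image_extP [a [b [Fab sa pb ->]]].
    exact: S_edge Fab sa pb.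
  exact/esym/(S_edge _ _ _ Fab sa pb).
have vy : ext_vertex (lang Y) (s ++ p) (inl (letter_before sigma l s y)).
  by rewrite /= inE; apply/asboolP/lang_consP; exists (letter_after sigma l p y); apply: ext_y.
have vx : ext_vertex (lang Y) (s ++ p) (inr (letter_after sigma l p x)).
  rewrite /= inE; apply/asboolP/lang_rconsP.
  by exists (letter_before sigma l s x); apply: ext_x.
have := closed_connect S_closed (conn _ _ vy vx).
by rewrite !unfold_in /= eqxx (negbTE after_neq).
Qed.

End SftImage.

Lemma suffix_lcs_images z : suffix s (sigma z).
Proof.
apply/negPn/negP => nz.
pose g a := if letter_before sigma l s a == letter_before sigma l s y then y else x.
apply: (@sft_image_not_separated (fun a b => (a == z) || (b == g a))).
- by move=> a; exists (g a); rewrite eqxx orbT.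
- by move=> b; exists z; rewrite eqxx.
- exact: hub_tree.
- by rewrite /g (negbTE before_neq) eqxx orbT.
- by rewrite /g !eqxx orbT.
move=> a b /orP [/eqP -> sz|/eqP ->] _; first by rewrite sz in nz.
by rewrite /g; case: ifP => _ _; rewrite ?eqxx ?(negbTE after_neq).
Qed.

Lemma prefix_lcp_images z : prefix p (sigma z).
Proof.
apply/negPn/negP => nz.
pose h b := if letter_after sigma l p b == letter_after sigma l p y then y else x.
apply: (@sft_image_not_separated (fun a b => (b == z) || (a == h b))).
- by move=> a; exists z; rewrite eqxx.
- by move=> b; exists (h b); rewrite eqxx orbT.
- exact: bigraph_swap_tree (hub_tree z h).
- by rewrite /h (negbTE after_neq) eqxx orbT.
- by rewrite /h !eqxx orbT.
move=> a b /orP [/eqP -> _ pz|/eqP -> _ _]; first by rewrite pz in nz.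
by rewrite /h; case: ifP => _; rewrite ?eqxx ?(negbTE before_neq).
Qed.

End Counterexample.

Lemma lcs_images_const a1 a2 a3 a4 : a1 != a2 -> a3 != a4 ->
  lcs (sigma a1) (sigma a2) = lcs (sigma a3) (sigma a4).
Proof. by move=> n12 n34; apply: suffix_anti; apply: suffix_lcs; apply: suffix_lcs_images. Qed.

Lemma lcp_images_const b1 b2 b3 b4 : b1 != b2 -> b3 != b4 ->
  lcp (sigma b1) (sigma b2) = lcp (sigma b3) (sigma b4).
Proof. by move=> n12 n34; apply: prefix_anti; apply: prefix_lcp; apply: prefix_lcp_images. Qed.

End Backward.

Theorem corollary4p7 (A B : finType) (sigma : A -> seq B) :
  (1 < #|A|)%N ->
  injective (morph sigma) ->
  strongly_left_proper sigma ->
  ((exists! t, Tminus sigma t) /\ (exists! t, Tplus sigma t)) <->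
  (forall X : (int -> A) -> Prop, shift_space X ->
     forall v : seq A, bispecial (lang X) v -> dendric (lang X) v ->
       dendric_preserving sigma X v).
Proof.
move=> A2 inj [l slp]; split.
  move=> [/(offdiag_uniqueP _ A2) lcs_const /(offdiag_uniqueP _ A2) lcp_const] X _ v _.
  exact: dendric_preserving_of_const.
move=> preserving; split; apply/(offdiag_uniqueP _ A2).
  exact: lcs_images_const.
exact: lcp_images_const.
Qed.
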